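(* Let $\Phi=(A;\{E_i\}_{i=0}^d;A^*;\{E^*_i\}_{i=0}^d)$ be a tridiagonal system on $V$ with $d\ge1$, such that $(A,A^* )$ satisfies the $q$-Serre relations, with $E_iV$ the eigenspace of $A$ for $\theta_i=q^{2i-d}$ and $E^*_iV$ the eigenspace of $A^*$ for $\theta^*_i=q^{d-2i}$. Let $\{U_i\}_{i=0}^d$ be its split decomposition, $K:V\to V$ the linear map acting on $U_i$ as $q^{d-2i}I$, $t$ a scalar, $B=A$ and $B^*=tA^*+(1-t)K$. Then $B$ and $B^*$ satisfy the $q$-Serre relations: $$B^3B^*-[3]_qB^2B^*B+[3]_qBB^*B^2-B^*B^3=0,\qquad B^{*3}B-[3]_qB^{*2}BB^*+[3]_qB^*BB^{*2}-BB^{*3}=0.$$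
   Context: $\mathcal K$ is an algebraically closed field; $V$ is a nonzero finite-dimensional vector space over $\mathcal K$; $q\in\mathcal K$ is nonzero and not a root of unity; $[3]_q=\frac{q^3-q^{-3}}{q-q^{-1}}=q^2+1+q^{-2}$. The $q$-Serre relations for $(X,Y)$: $X^3Y-[3]_qX^2YX+[3]_qXYX^2-YX^3=0$ and $Y^3X-[3]_qY^2XY+[3]_qYXY^2-XY^3=0$. Primitive idempotent of a diagonalizable $X$ for eigenvalue $\lambda_i$: $\prod_{j\ne i}\frac{X-\lambda_jI}{\lambda_i-\lambda_j}$. A tridiagonal system on $V$ is a sequence $(A;\{E_i\}_{i=0}^d;A^*;\{E^*_i\}_{i=0}^d)$ with $A,A^*$ diagonalizable, $\{E_i\}$, $\{E^*_i\}$ orderings of their primitive idempotents, $E_iA^*E_j=0$ and $E^*_iAE^*_j=0$ when $|i-j|>1$, and no subspaces other than $0,V$ invariant under both $A$ and $A^*$. Split decomposition: $U_i=(E^*_0V+\cdots+E^*_iV)\cap(E_iV+\cdots+E_dV)$; known: $V=U_0\oplus\cdots\oplus U_d$, $(A-\theta_iI)U_i\subseteq U_{i+1}$, $(A^*-\theta^*_iI)U_i\subseteq U_{i-1}$ ($U_{-1}=U_{d+1}=0$). *)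

From mathcomp Require Import all_boot all_order all_algebra.
Set Implicit Arguments. Unset Strict Implicit. Unset Printing Implicit Defensive.
Import GRing.Theory.
Local Open Scope ring_scope.

(* Convention: V = 'rV[F]_n (row vectors, n = dim V), a linear map is a matrix
   X : 'M_n acting by v |-> v *m X; the image X V of X is the row space of X. *)

Section TD.
Variables (F : fieldType) (n : nat).

Definition qint3 (q : F) : F := q ^+ 2 + 1 + q ^- 2.

Definition qSerre (q : F) (X Y : 'M[F]_n) : Prop :=
  X *m X *m X *m Y - qint3 q *: (X *m X *m Y *m X)
    + qint3 q *: (X *m Y *m X *m X) - Y *m X *m X *m X = 0 /\
  Y *m Y *m Y *m X - qint3 q *: (Y *m Y *m X *m Y)
    + qint3 q *: (Y *m X *m Y *m Y) - X *m Y *m Y *m Y = 0.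

Definition prim_idem (X : 'M[F]_n) (d : nat) (th : nat -> F) (i : nat)
  : 'M[F]_n :=
  \big[mulmx/1%:M]_(j < d.+1 | j != i :> nat)
    ((th i - th j)^-1 *: (X - (th j)%:M)).

Definition diag_with_eigenvalues (X : 'M[F]_n) (d : nat) (th : nat -> F)
  : Prop :=
  diagonalizable X /\
  (forall a : F, eigenvalue X a <-> exists2 i, (i <= d)%N & a = th i).

Definition tridiagonal_system (A As : 'M[F]_n) (d : nat) (th ths : nat -> F)
  : Prop :=
  [/\ diag_with_eigenvalues A d th,
      diag_with_eigenvalues As d ths,
      (forall i j, (i <= d)%N -> (j <= d)%N -> (j.+1 < i)%N || (i.+1 < j)%N ->
         prim_idem A d th i *m As *m prim_idem A d th j = 0),
      (forall i j, (i <= d)%N -> (j <= d)%N -> (j.+1 < i)%N || (i.+1 < j)%N ->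
         prim_idem As d ths i *m A *m prim_idem As d ths j = 0) &
      (forall W : 'M[F]_n, (W *m A <= W)%MS -> (W *m As <= W)%MS ->
         (W == (0 : 'M[F]_n))%MS || row_full W)].

Definition split_comp (A As : 'M[F]_n) (d : nat) (th ths : nat -> F) (i : nat)
  : 'M[F]_n :=
  ((\sum_(j < d.+1 | (j <= i)%N) prim_idem As d ths j)
     :&: (\sum_(j < d.+1 | (i <= j)%N) prim_idem A d th j))%MS.

End TD.

(* On the split component U_i the map K acts as q^(d-2i), so K is invertible
   and K^-1 acts as theta_i.  Since (A - theta_i I) U_i <= U_(i+1) and
   (A* - theta*_i I) U_i <= U_(i-1), the matrices L = A - K^-1 and R = A* - K
   satisfy L K = q^-2 K L and R K = q^2 K R; say they have weight q^-2 and q^2.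
   The first gives A K - q^-2 K A = (1 - q^-2) I, which implies the q-Serre
   relation for (A, K); by linearity in the second argument this gives the
   first relation for B = A and B*.  For the second relation expand the Serre
   expression of B* = K + t R against A = K^-1 + L in powers of t.  A direct
   computation kills the K^-1 parts of the coefficients of t^0, t^1, t^2 and
   the L part of the constant term; the four remaining terms have weights
   1, q^2, q^4, q^6.  At t = 1 their sum is the Serre expression of (A*, A),
   which vanishes, and as q is not a root of unity each term vanishes
   separately; hence so does the whole polynomial in t. *)

From mathcomp Require Import all_boot all_order all_algebra ring zify.
Set Implicit Arguments. Unset Strict Implicit. Unset Printing Implicit Defensive.
Import GRing.Theory.
Local Open Scope ring_scope.

Section Weights.
Variables (F : fieldType) (n : nat) (K : 'M[F]_n).

Definition has_weight (a : F) (M : 'M[F]_n) := M *m K = a *: (K *m M).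

Lemma has_weightM a b M N :
  has_weight a M -> has_weight b N -> has_weight (a * b) (M *m N).
Proof.
rewrite /has_weight => wM wN.
have -> : M *m N *m K = b *: (M *m K *m N) by rewrite -mulmxA wN -scalemxAr mulmxA.
by rewrite wM -scalemxAl scalerA mulrC !mulmxA.
Qed.

Lemma has_weightD a M N : has_weight a M -> has_weight a N -> has_weight a (M + N).
Proof. by rewrite /has_weight => wM wN; rewrite mulmxDl wM wN mulmxDr scalerDr. Qed.

Lemma has_weightN a M : has_weight a M -> has_weight a (- M).
Proof. by rewrite /has_weight => wM; rewrite mulNmx wM mulmxN scalerN. Qed.

Lemma has_weightZ a b M : has_weight a M -> has_weight a (b *: M).
Proof. by rewrite /has_weight => wM; rewrite -scalemxAl wM -scalemxAr !scalerA mulrC. Qed.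

Lemma has_weight_eq a b M : a = b -> has_weight a M -> has_weight b M.
Proof. by move->. Qed.

Hypothesis K_unit : K \in unitmx.

(* Components of distinct weights are eigenvectors of [M |-> K^-1 M K] for
   distinct eigenvalues, hence linearly independent. *)
Lemma has_weight_sum_eq0 (I : eqType) (r : seq I) (w : I -> F) (M : I -> 'M[F]_n) :
  uniq (map w r) -> (forall i, i \in r -> has_weight (w i) (M i)) ->
  \sum_(i <- r) M i = 0 -> forall i, i \in r -> M i = 0.
Proof.
elim: r M => // j r IHr M /= /andP[wj_notin uniq_wr] wM.
rewrite big_cons => sum_eq0.
have wMj : has_weight (w j) (M j) by apply: wM; rewrite mem_head.
have wMr i : i \in r -> has_weight (w i) (M i).
  by move=> ir; apply: wM; rewrite inE ir orbT.
have scaled_eq0 : forall i, i \in r -> (w i - w j) *: M i = 0.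
  apply: IHr => // [i ir|]; first exact/has_weightZ/wMr.
  apply: (can_inj (mulKmx K_unit)); rewrite mulmx0.
  have := congr1 (fun X => X *m K - w j *: (K *m X)) sum_eq0.
  rewrite /= mul0mx mulmx0 scaler0 subrr mulmxDl mulmxDr wMj scalerDr.
  rewrite opprD addrACA subrr add0r => eq0; rewrite -[RHS]eq0.
  rewrite mulmx_suml [K *m \sum_(i <- r) M i]mulmx_sumr scaler_sumr -sumrB.
  rewrite mulmx_sumr; apply: eq_big_seq => i ir.
  by rewrite (wMr i ir) -scalemxAr -scalerBl.
have Mr_eq0 i : i \in r -> M i = 0.
  move=> ir; have /eqP := scaled_eq0 i ir.
  rewrite scalemx_eq0 subr_eq0 => /orP[/eqP wij|/eqP //].
  by move: wj_notin; rewrite -wij map_f.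
have Mj_eq0 : M j = 0.
  by move: sum_eq0; rewrite big1_seq ?addr0 // => i /andP[_ /Mr_eq0].
by move=> i; rewrite inE => /orP[/eqP -> //|/Mr_eq0].
Qed.

Lemma qWeyl_of_weight (A : 'M[F]_n) s :
  has_weight s (A - invmx K) -> A *m K = s *: (K *m A) + (1 - s) *: 1%:M.
Proof.
rewrite /has_weight mulmxBl mulmxBr mulVmx // mulmxV // => /eqP.
rewrite subr_eq => /eqP ->.
by apply/matrixP => i j; rewrite !mxE; ring.
Qed.

End Weights.

Section SerreTerm.
Variables (F : fieldType) (n : nat).
Implicit Types (c t : F) (K R X Y : 'M[F]_n).

Definition serre_term c (Y1 Y2 Y3 X : 'M[F]_n) :=
  Y1 *m Y2 *m Y3 *m X - c *: (Y1 *m Y2 *m X *m Y3)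
  + c *: (Y1 *m X *m Y2 *m Y3) - X *m Y1 *m Y2 *m Y3.

Lemma qSerreE q X Y :
  qSerre q X Y <->
  serre_term (qint3 q) X X X Y = 0 /\ serre_term (qint3 q) Y Y Y X = 0.
Proof. by []. Qed.

Lemma serre_termDZ c (Y1 Y2 Y3 : 'M[F]_n) a b X X' :
  serre_term c Y1 Y2 Y3 (a *: X + b *: X') =
  a *: serre_term c Y1 Y2 Y3 X + b *: serre_term c Y1 Y2 Y3 X'.
Proof.
rewrite /serre_term !(mulmxDl, mulmxDr); do ![rewrite -scalemxAl | rewrite -scalemxAr].
by apply/matrixP => i j; rewrite !mxE; ring.
Qed.

Lemma serre_termD c (Y1 Y2 Y3 : 'M[F]_n) X X' :
  serre_term c Y1 Y2 Y3 (X + X') = serre_term c Y1 Y2 Y3 X + serre_term c Y1 Y2 Y3 X'.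
Proof. by have := serre_termDZ c Y1 Y2 Y3 1 1 X X'; rewrite !scale1r. Qed.

Lemma has_weight_serre_term c K (Y1 Y2 Y3 : 'M[F]_n) X a1 a2 a3 b :
  has_weight K a1 Y1 -> has_weight K a2 Y2 -> has_weight K a3 Y3 ->
  has_weight K b X -> has_weight K (a1 * a2 * a3 * b) (serre_term c Y1 Y2 Y3 X).
Proof.
move=> w1 w2 w3 wX.
apply: has_weightD; [apply: has_weightD; [apply: has_weightD|]|];
  do ?[apply: has_weightN | apply: has_weightZ].
- exact: has_weightM (has_weightM (has_weightM w1 w2) w3) wX.
- by apply: has_weight_eq (has_weightM (has_weightM (has_weightM w1 w2) wX) w3); ring.
- by apply: has_weight_eq (has_weightM (has_weightM (has_weightM w1 wX) w2) w3); ring.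
- by apply: has_weight_eq (has_weightM (has_weightM (has_weightM wX w1) w2) w3); ring.
Qed.

(* The coefficient of [t ^+ k] in [serre_term c B B B X] for [B = K + t *: R]. *)
Definition serre_coef c K R X (k : nat) :=
  match k with
  | 0 => serre_term c K K K X
  | 1 => serre_term c R K K X + serre_term c K R K X + serre_term c K K R X
  | 2 => serre_term c R R K X + serre_term c R K R X + serre_term c K R R X
  | _ => serre_term c R R R X
  end.

Lemma serre_term_expand c t K R X :
  let B := K + t *: R in
  serre_term c B B B X = \sum_(k < 4) t ^+ k *: serre_coef c K R X k.
Proof.
rewrite /= !big_ord_recr big_ord0 /= /serre_coef /serre_term !(mulmxDl, mulmxDr).
do ![rewrite -scalemxAl | rewrite -scalemxAr].
by apply/matrixP => i j; rewrite !mxE; ring.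
Qed.

Lemma serre_coefD c K R X X' k :
  serre_coef c K R (X + X') k = serre_coef c K R X k + serre_coef c K R X' k.
Proof.
have addrACA3 (a a' b b' e e' : 'M[F]_n) :
    a + a' + (b + b') + (e + e') = a + b + e + (a' + b' + e').
  by rewrite (addrACA a a' b b') (addrACA (a + b)).
by case: k => [|[|[|k]]]; rewrite /serre_coef !serre_termD //; apply: addrACA3.
Qed.

Lemma has_weight_serre_coef c K R X r b (k : nat) : (k < 4)%N ->
  has_weight K r R -> has_weight K b X ->
  has_weight K (r ^+ k * b) (serre_coef c K R X k).
Proof.
have wK : has_weight K 1 K by rewrite /has_weight scale1r.
move=> k_lt4 wR wX.
have wT (Y1 Y2 Y3 : 'M[F]_n) a1 a2 a3 : has_weight K a1 Y1 -> has_weight K a2 Y2 ->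
    has_weight K a3 Y3 -> a1 * a2 * a3 = r ^+ k ->
    has_weight K (r ^+ k * b) (serre_term c Y1 Y2 Y3 X).
  by move=> w1 w2 w3 <-; exact: has_weight_serre_term.
case: k k_lt4 wT => [|[|[|[|//]]]] _ wT; rewrite /serre_coef.
- by apply: (wT _ _ _ _ _ _ wK wK wK); rewrite !mulr1.
- apply: has_weightD; first apply: has_weightD.
  + by apply: (wT _ _ _ _ _ _ wR wK wK); rewrite !mulr1.
  + by apply: (wT _ _ _ _ _ _ wK wR wK); rewrite mul1r mulr1.
  + by apply: (wT _ _ _ _ _ _ wK wK wR); rewrite !mul1r.
- apply: has_weightD; first apply: has_weightD.
  + by apply: (wT _ _ _ _ _ _ wR wR wK); rewrite mulr1.
  + by apply: (wT _ _ _ _ _ _ wR wK wR); rewrite mulr1.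
  + by apply: (wT _ _ _ _ _ _ wK wR wR); rewrite mul1r.
- by apply: (wT _ _ _ _ _ _ wR wR wR); rewrite -!expr2 -exprSr.
Qed.

End SerreTerm.

Arguments serre_coef : simpl never.

Lemma expfz_inj (F : fieldType) (q : F) :
  q != 0 -> (forall m, (0 < m)%N -> q ^+ m != 1) -> injective (fun z : int => q ^ z).
Proof.
move=> q_neq0 q_nonroot a b /= /eqP; rewrite -subr_eq0 -[a](subrK b) expfzDr //.
rewrite -{2}[q ^ b]mul1r -mulrBl mulf_eq0 expfz_eq0 (negbTE q_neq0) andbF orbF subr_eq0.
case: (a - b) => [[|m]|m] /=; first by rewrite add0r.
- by rewrite (negbTE (q_nonroot _ _)).
- by rewrite invr_eq1 (negbTE (q_nonroot _ _)).
Qed.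

Lemma expf_inj (F : fieldType) (q : F) :
  q != 0 -> (forall m, (0 < m)%N -> q ^+ m != 1) -> injective (fun m : nat => q ^+ m).
Proof.
move=> q_neq0 q_nonroot a b eq_ab; apply/eqP; rewrite -eqz_nat.
exact/eqP/(expfz_inj q_neq0 q_nonroot).
Qed.

Section QSerreAlgebra.
Variables (F : fieldType) (n : nat) (q : F).
Hypothesis q_neq0 : q != 0.

Lemma serre_term_qWeyl (A K : 'M[F]_n) z :
  A *m K = q^-2 *: (K *m A) + z *: 1%:M -> serre_term (qint3 q) A A A K = 0.
Proof.
move=> AK; have AKM (M : 'M[F]_n) : A *m (K *m M) = q^-2 *: (K *m (A *m M)) + z *: M.
  by rewrite mulmxA AK mulmxDl -!scalemxAl mul1mx mulmxA.
rewrite /serre_term -!mulmxA.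
do ![rewrite AKM | rewrite AK | rewrite mulmxDr | rewrite -scalemxAr | rewrite scalerDr
    | rewrite scalerA | rewrite mulmx1].
move: (K *m (A *m (A *m A))) (A *m A) => P Q.
by apply/matrixP => i j; rewrite !mxE /qint3; field.
Qed.

Lemma serre_term_weight_qinv2 (Y X : 'M[F]_n) :
  has_weight Y (q^-2) X -> serre_term (qint3 q) Y Y Y X = 0.
Proof.
rewrite /has_weight => XY; have XYM (M : 'M[F]_n) : X *m (Y *m M) = q^-2 *: (Y *m (X *m M)).
  by rewrite mulmxA XY -scalemxAl mulmxA.
rewrite /serre_term -!mulmxA.
do ![rewrite XYM | rewrite XY | rewrite -scalemxAr | rewrite scalerA].
move: (Y *m (Y *m (Y *m X))) => P.
by apply/matrixP => i j; rewrite !mxE /qint3; field.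
Qed.

Variables (K R : 'M[F]_n).
Hypotheses (K_unit : K \in unitmx) (R_weight : has_weight K (q^+2) R).

Lemma serre_coef_invmx_eq0 k : (k < 3)%N -> serre_coef (qint3 q) K R (invmx K) k = 0.
Proof.
have q2_neq0 : q^+2 != 0 by rewrite expf_neq0.
have KR : K *m R = q^-2 *: (R *m K) by rewrite R_weight scalerA mulVf // scale1r.
have iKR : invmx K *m R = q^+2 *: (R *m invmx K).
  transitivity (invmx K *m (R *m K) *m invmx K).
    by rewrite -!mulmxA mulmxV // mulmx1.
  by rewrite R_weight -scalemxAr -scalemxAl mulmxA mulVmx // mul1mx.
have KRM (M : 'M[F]_n) : K *m (R *m M) = q^-2 *: (R *m (K *m M)).
  by rewrite mulmxA KR -scalemxAl mulmxA.
have iKRM (M : 'M[F]_n) : invmx K *m (R *m M) = q^+2 *: (R *m (invmx K *m M)).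
  by rewrite mulmxA iKR -scalemxAl mulmxA.
have KiKM (M : 'M[F]_n) : K *m (invmx K *m M) = M by rewrite mulKVmx.
have iKKM (M : 'M[F]_n) : invmx K *m (K *m M) = M by rewrite mulKmx.
case: k => [|[|[|//]]] _; rewrite /serre_coef /serre_term -!mulmxA;
  do ![rewrite KRM | rewrite iKRM | rewrite KiKM | rewrite iKKM | rewrite KR
      | rewrite iKR | rewrite (mulmxV K_unit) | rewrite (mulVmx K_unit) | rewrite mulmx1
      | rewrite -scalemxAr | rewrite scalerA];
  by apply/matrixP => i j; rewrite !mxE /qint3; field.
Qed.

Variable L : 'M[F]_n.
Hypothesis L_weight : has_weight K (q^-2) L.
Local Notation c := (qint3 q).
Local Notation cA := (serre_coef c K R (invmx K)).
Local Notation cL := (serre_coef c K R L).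

Let cL0_eq0 : cL 0 = 0 := serre_term_weight_qinv2 L_weight.

Lemma serre_term_pencil1E :
  serre_term c (K + R) (K + R) (K + R) (invmx K + L) = cL 1 + (cL 2 + (cL 3 + cA 3)).
Proof.
have cA_eq0 k : (k < 3)%N -> cA k = 0 := @serre_coef_invmx_eq0 k.
rewrite [cL 3 + _]addrC addrA -[R]scale1r serre_term_expand !big_ord_recr big_ord0.
rewrite !serre_coefD /= !expr1n !scale1r !(cA_eq0 0%N, cA_eq0 1%N, cA_eq0 2%N) //.
by rewrite cL0_eq0 !add0r.
Qed.

Hypothesis q_nonroot : forall m, (0 < m)%N -> q ^+ m != 1.

(* The four coefficients surviving in [serre_term_pencil1E] have the distinct
   weights [1], [q ^+ 2], [q ^+ 4] and [q ^+ 6], so they vanish separately. *)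
Lemma serre_coef_pencil_eq0 k : (k < 4)%N ->
  serre_term c (K + R) (K + R) (K + R) (invmx K + L) = 0 ->
  serre_coef c K R (invmx K + L) k = 0.
Proof.
move=> k_lt4 serre1; have K_weight : has_weight K 1 (invmx K).
  by rewrite /has_weight scale1r mulVmx // mulmxV.
have wcA b : (q ^+ 2) ^+ 3 = b -> has_weight K b (cA 3).
  move=> <-; rewrite -[X in has_weight K X]mulr1.
  exact: has_weight_serre_coef R_weight K_weight.
have wcL k' b : (k' < 4)%N -> (q ^+ 2) ^+ k' * q^-2 = b -> has_weight K b (cL k').
  by move=> k'_lt4 <-; apply: has_weight_serre_coef k'_lt4 R_weight L_weight.
pose comps := [:: (q ^+ 0, cL 1); (q ^+ 2, cL 2); (q ^+ 4, cL 3); (q ^+ 6, cA 3)].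
have comps_eq0 : forall p, p \in comps -> p.2 = 0.
  apply: (@has_weight_sum_eq0 _ _ _ K_unit _ comps fst snd).
  - have q_inj : injective (fun m : nat => q ^+ m) := expf_inj q_neq0 q_nonroot.
    by rewrite (map_inj_uniq q_inj [:: 0; 2; 4; 6]%N).
  - rewrite /comps => p; rewrite !inE => /or4P[] /eqP -> /=.
    + by apply: wcL => //; rewrite expr1 mulfV // expf_neq0.
    + by apply: wcL => //; rewrite -mulrA mulfV ?mulr1 // expf_neq0.
    + by apply: wcL => //; field.
    + by apply: wcA; rewrite -exprM.
  - by rewrite !big_cons big_nil addr0 -serre_term_pencil1E.
have [cL1_eq0 cL2_eq0 cL3_eq0 cA3_eq0] : [/\ cL 1 = 0, cL 2 = 0, cL 3 = 0 & cA 3 = 0].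
  split; [apply: (comps_eq0 (q ^+ 0, _)) | apply: (comps_eq0 (q ^+ 2, _))
         | apply: (comps_eq0 (q ^+ 4, _)) | apply: (comps_eq0 (q ^+ 6, _))];
  by rewrite !inE eqxx ?orbT.
rewrite serre_coefD; case: k k_lt4 => [|[|[|[|//]]]] _.
- by rewrite serre_coef_invmx_eq0 // cL0_eq0 addr0.
- by rewrite serre_coef_invmx_eq0 // cL1_eq0 addr0.
- by rewrite serre_coef_invmx_eq0 // cL2_eq0 addr0.
by rewrite cA3_eq0 cL3_eq0 addr0.
Qed.

Lemma serre_term_pencil t :
  serre_term c (K + R) (K + R) (K + R) (invmx K + L) = 0 ->
  let B := K + t *: R in serre_term c B B B (invmx K + L) = 0.
Proof.
move=> serre1 /=; rewrite serre_term_expand big1 // => k _.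
by rewrite serre_coef_pencil_eq0 ?scaler0.
Qed.

End QSerreAlgebra.

Lemma mulmx_big_eigen (F : fieldType) (n : nat) (v : 'rV[F]_n) (I : Type)
    (r : seq I) (P : pred I) (M : I -> 'M[F]_n) (a : I -> F) :
  (forall i, P i -> v *m M i = a i *: v) ->
  v *m \big[mulmx/1%:M]_(i <- r | P i) M i = (\prod_(i <- r | P i) a i) *: v.
Proof.
move=> vM; elim/big_rec2: _ => [|i N b Pi IH]; first by rewrite mulmx1 scale1r.
by rewrite mulmxA vM // -scalemxAl IH scalerA.
Qed.

Lemma mulmx_shift_subE (F : fieldType) (m n : nat) (U W : 'M[F]_(m, n))
    (X : 'M[F]_n) a :
  (U <= W)%MS -> (U *m (X - a%:M) <= W)%MS = (U *m X <= W)%MS.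
Proof.
move=> UW; have aUW : (a *: U <= W)%MS by rewrite scalemx_sub.
rewrite mulmxBr mul_mx_scalar; apply/idP/idP => sub.
  by rewrite -(subrK (a *: U) (U *m X)) addmx_sub.
by rewrite addmx_sub // eqmx_opp.
Qed.

Section PrimitiveIdempotents.
Variables (F : fieldType) (n : nat) (X : 'M[F]_n) (d : nat) (th : nat -> F).
Hypothesis th_inj : forall i j, (i <= d)%N -> (j <= d)%N -> th i = th j -> i = j.
Local Notation E := (prim_idem X d th).

Lemma mulmx_prim_idem_eigen m (v : 'rV[F]_n) k :
  (m <= d)%N -> v *m X = th m *: v -> v *m E k = if k == m then v else 0.
Proof.
move=> m_le_d vX; rewrite /prim_idem (@mulmx_big_eigen _ _ _ _ _ _ _
  (fun j : 'I_d.+1 => (th k - th j)^-1 * (th m - th j))); last first.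
  by move=> j _; rewrite -scalemxAr mulmxBr vX mul_mx_scalar -scalerBl scalerA.
have [->|k_neq_m] := eqVneq k m.
  rewrite big1 ?scale1r // => j j_neq_m; rewrite mulVf // subr_eq0.
  by apply: contra j_neq_m => /eqP/th_inj-> //; rewrite -ltnS.
rewrite (bigD1 (Ordinal (m_le_d : (m < d.+1)%N))) /=; last by rewrite eq_sym.
by rewrite subrr mulr0 mul0r scale0r.
Qed.

Hypothesis X_diag : diag_with_eigenvalues X d th.

Lemma eigenvector_ext (M N : 'M[F]_n) :
  (forall m (v : 'rV[F]_n), (m <= d)%N -> v *m X = th m *: v -> v *m M = v *m N) ->
  M = N.
Proof.
case: X_diag => /diagonalizablePeigen[rs _ rsP] X_eig vMN.
suff : (\sum_(r <- rs) eigenspace X r <= kermx (M - N))%MS.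
  by rewrite rsP sub_kermx mul1mx subr_eq0 => /eqP.
elim/big_rec: _ => [|r S _ S_sub]; first exact: sub0mx.
rewrite addsmx_sub S_sub andbT; apply/row_subP => i; set v := row i _.
have /eigenspaceP vX : (v <= eigenspace X r)%MS by apply: row_sub.
have [->|v_neq0] := eqVneq v 0; first by rewrite sub0mx.
have /X_eig[m m_le_d r_eq] : eigenvalue X r by apply/eigenvalueP; exists v.
by rewrite sub_kermx mulmxBr subr_eq0 (vMN m) // -r_eq.
Qed.

Lemma sum_prim_idem : \sum_(k < d.+1) E k = 1%:M.
Proof.
apply: eigenvector_ext => m v m_le_d vX.
rewrite mulmx1 mulmx_sumr (bigD1 (Ordinal (m_le_d : (m < d.+1)%N))) //=.
rewrite (mulmx_prim_idem_eigen _ m_le_d vX) eqxx big1 ?addr0 // => k k_neq_m.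
by rewrite (mulmx_prim_idem_eigen _ m_le_d vX) ifN.
Qed.

Lemma prim_idem_mulmx k : E k *m X = th k *: E k.
Proof.
apply: eigenvector_ext => m v m_le_d vX.
rewrite mulmxA (mulmx_prim_idem_eigen _ m_le_d vX) -scalemxAr.
rewrite (mulmx_prim_idem_eigen _ m_le_d vX).
by have [->|_] := eqVneq k m; rewrite ?vX ?mul0mx ?scaler0.
Qed.

Definition lower_flag i := (\sum_(j < d.+1 | (j <= i)%N) E j)%MS.
Definition upper_flag i := (\sum_(j < d.+1 | (i <= j)%N) E j)%MS.

Lemma lower_flag_subS i : (lower_flag i <= lower_flag i.+1)%MS.
Proof. by apply/sumsmx_subP => j j_le_i; apply: (sumsmx_sup j) => //; apply: leqW. Qed.

Lemma upper_flag_Ssub i : (upper_flag i.+1 <= upper_flag i)%MS.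
Proof. by apply/sumsmx_subP => j i_lt_j; apply: (sumsmx_sup j) => //; apply: ltnW. Qed.

Lemma upper_flag_shift i : (upper_flag i *m (X - (th i)%:M) <= upper_flag i.+1)%MS.
Proof.
rewrite sumsmxMr; apply/sumsmx_subP => j i_le_j.
rewrite mulmxBr prim_idem_mulmx mul_mx_scalar -scalerBl.
have [->|j_neq_i] := eqVneq (j : nat) i; first by rewrite subrr scale0r sub0mx.
by rewrite scalemx_sub // (sumsmx_sup j) // ltn_neqAle eq_sym j_neq_i.
Qed.

Lemma lower_flag_shift i :
  (lower_flag i *m (X - (th i)%:M) <= \sum_(j < d.+1 | (j < i)%N) E j)%MS.
Proof.
rewrite sumsmxMr; apply/sumsmx_subP => j j_le_i.
rewrite mulmxBr prim_idem_mulmx mul_mx_scalar -scalerBl.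
have [->|j_neq_i] := eqVneq (j : nat) i; first by rewrite subrr scale0r sub0mx.
by rewrite scalemx_sub // (sumsmx_sup j) // ltn_neqAle j_neq_i.
Qed.

Variable Y : 'M[F]_n.
Hypothesis Y_tridiag : forall a b, (a <= d)%N -> (b <= d)%N ->
  (b.+1 < a)%N || (a.+1 < b)%N -> E a *m Y *m E b = 0.

Lemma lower_flag_tridiag i : (lower_flag i *m Y <= lower_flag i.+1)%MS.
Proof.
rewrite sumsmxMr; apply/sumsmx_subP => j j_le_i.
rewrite -[_ *m Y]mulmx1 -sum_prim_idem mulmx_sumr; apply: summx_sub => k _.
have [j1_lt_k|k_le_j1] := ltnP j.+1 k.
  by rewrite Y_tridiag ?sub0mx ?j1_lt_k ?orbT // -ltnS.
by apply: submx_trans (submxMl _ _) _; apply: (sumsmx_sup k); rewrite // (leq_trans k_le_j1).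
Qed.

Lemma upper_flag_tridiag i : (upper_flag i.+1 *m Y <= upper_flag i)%MS.
Proof.
rewrite sumsmxMr; apply/sumsmx_subP => j i_lt_j.
rewrite -[_ *m Y]mulmx1 -sum_prim_idem mulmx_sumr; apply: summx_sub => k _.
have [k1_lt_j|j_le_k1] := ltnP k.+1 j.
  by rewrite Y_tridiag ?sub0mx ?k1_lt_j // -ltnS.
by apply: submx_trans (submxMl _ _) _; apply: (sumsmx_sup k); rewrite // -ltnS (leq_trans i_lt_j).
Qed.

End PrimitiveIdempotents.

Section Grading.
Variables (F : fieldType) (n : nat) (U : nat -> 'M[F]_n) (d : nat).
Hypotheses (U_full : row_full (\sum_(i < d.+1) U i)%MS)
           (U_eq0 : forall i, (d < i)%N -> U i = 0).

Let sub1_sumU : (1%:M <= \sum_(i < d.+1) U i)%MS.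
Proof. by rewrite sub1mx. Qed.

Lemma graded_ext (M N : 'M[F]_n) :
  (forall i, (i <= d)%N -> U i *m M = U i *m N) -> M = N.
Proof.
move=> UMN; suff : (\sum_(i < d.+1) U i <= kermx (M - N))%MS.
  by move/(submx_trans sub1_sumU); rewrite sub_kermx mul1mx subr_eq0 => /eqP.
by apply/sumsmx_subP => i _; rewrite sub_kermx mulmxBr UMN ?subrr // -ltnS.
Qed.

Variables (K : 'M[F]_n) (kappa : nat -> F).
Hypothesis UK : forall i, (i <= d)%N -> U i *m K = kappa i *: U i.

Lemma grading_mulmx i : U i *m K = kappa i *: U i.
Proof.
by have [/UK //|d_lt_i] := leqP i d; rewrite U_eq0 // mul0mx scaler0.
Qed.

Lemma grading_mulmx_sub i (M : 'M[F]_n) : (M <= U i)%MS -> M *m K = kappa i *: M.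
Proof. by move=> /submxP[P ->]; rewrite -mulmxA grading_mulmx scalemxAr. Qed.

Lemma lowering_weight (M : 'M[F]_n) s :
  U 0 *m M = 0 -> (forall i, (U i.+1 *m M <= U i)%MS) ->
  (forall i, kappa i = s * kappa i.+1) -> has_weight K s M.
Proof.
move=> U0M UM kappaS; apply: graded_ext => -[|i] _.
  by rewrite mulmxA U0M mul0mx -scalemxAr mulmxA grading_mulmx -scalemxAl U0M !scaler0.
rewrite mulmxA (grading_mulmx_sub (UM i)) kappaS -scalemxAr mulmxA grading_mulmx.
by rewrite -scalemxAl !scalerA.
Qed.

Lemma raising_weight (M : 'M[F]_n) s :
  (forall i, (U i *m M <= U i.+1)%MS) ->
  (forall i, kappa i.+1 = s * kappa i) -> has_weight K s M.
Proof.
move=> UM kappaS; apply: graded_ext => i _.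
rewrite mulmxA (grading_mulmx_sub (UM i)) kappaS -scalemxAr mulmxA grading_mulmx.
by rewrite -scalemxAl !scalerA.
Qed.

Hypothesis kappa_neq0 : forall i, (i <= d)%N -> kappa i != 0.

Lemma grading_unitmx : K \in unitmx.
Proof.
rewrite -row_full_unit -sub1mx (submx_trans sub1_sumU) //.
apply/sumsmx_subP => i _; have kappa_i_neq0 : kappa i != 0 by rewrite kappa_neq0 // -ltnS.
by rewrite -[U i](scalerK kappa_i_neq0) -grading_mulmx scalemx_sub ?submxMl.
Qed.

Lemma grading_invmx i : U i *m invmx K = (kappa i)^-1 *: U i.
Proof.
have [i_le_d|d_lt_i] := leqP i d; last by rewrite U_eq0 // mul0mx scaler0.
have Ku := grading_unitmx.
apply: (canLR (mulmxK Ku)); rewrite -scalemxAl grading_mulmx scalerA.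
by rewrite mulVf ?scale1r ?kappa_neq0.
Qed.

End Grading.

Section SplitDecomposition.
Variables (F : fieldType) (n : nat) (A As : 'M[F]_n) (d : nat) (th ths : nat -> F).
Hypotheses (A_diag : diag_with_eigenvalues A d th)
           (As_diag : diag_with_eigenvalues As d ths).
Hypothesis th_inj : forall i j, (i <= d)%N -> (j <= d)%N -> th i = th j -> i = j.
Hypothesis ths_inj : forall i j, (i <= d)%N -> (j <= d)%N -> ths i = ths j -> i = j.
Hypothesis A_tridiag : forall i j, (i <= d)%N -> (j <= d)%N ->
  (j.+1 < i)%N || (i.+1 < j)%N -> prim_idem A d th i *m As *m prim_idem A d th j = 0.
Hypothesis As_tridiag : forall i j, (i <= d)%N -> (j <= d)%N ->
  (j.+1 < i)%N || (i.+1 < j)%N -> prim_idem As d ths i *m A *m prim_idem As d ths j = 0.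
Local Notation U := (split_comp A As d th ths).

Lemma split_comp_raise i : (U i *m (A - (th i)%:M) <= U i.+1)%MS.
Proof.
rewrite sub_capmx; apply/andP; split.
  apply: submx_trans (submxMr _ (capmxSl _ _)) _.
  by rewrite mulmx_shift_subE ?lower_flag_subS ?(lower_flag_tridiag ths_inj As_diag).
exact: submx_trans (submxMr _ (capmxSr _ _)) (upper_flag_shift th_inj A_diag i).
Qed.

Lemma split_comp_lower i : (U i.+1 *m (As - (ths i.+1)%:M) <= U i)%MS.
Proof.
rewrite sub_capmx; apply/andP; split.
  exact: submx_trans (submxMr _ (capmxSl _ _)) (lower_flag_shift ths_inj As_diag _).
apply: submx_trans (submxMr _ (capmxSr _ _)) _.
by rewrite mulmx_shift_subE ?upper_flag_Ssub ?(upper_flag_tridiag th_inj A_diag).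
Qed.

Lemma split_comp0_lower : U 0 *m (As - (ths 0)%:M) = 0.
Proof.
apply/eqP; rewrite -submx0; apply: submx_trans (submxMr _ (capmxSl _ _)) _.
apply: submx_trans (lower_flag_shift ths_inj As_diag 0) _.
by apply/sumsmx_subP => j; rewrite ltn0.
Qed.

Lemma split_comp_eq0 i : (d < i)%N -> U i = 0.
Proof.
move=> d_lt_i; apply/eqP; rewrite -submx0; apply: submx_trans (capmxSr _ _) _.
apply/sumsmx_subP => j i_le_j; have := ltn_ord j.
by rewrite ltnS leqNgt (leq_trans d_lt_i i_le_j).
Qed.

Lemma split_comp_sub_sum i : (U i <= \sum_(j < d.+1) U j)%MS.
Proof.
have [i_le_d|d_lt_i] := leqP i d; last by rewrite split_comp_eq0 ?sub0mx.
exact: (sumsmx_sup (Ordinal (i_le_d : (i < d.+1)%N))).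
Qed.

Hypothesis irreducible : forall W : 'M[F]_n,
  (W *m A <= W)%MS -> (W *m As <= W)%MS -> (W == (0 : 'M[F]_n))%MS || row_full W.

Lemma split_comp_sum_full : row_full (\sum_(i < d.+1) U i).
Proof.
set S := (\sum_(i < d.+1) U i)%MS.
have SA : (S *m A <= S)%MS.
  rewrite sumsmxMr; apply/sumsmx_subP => i _.
  rewrite -(mulmx_shift_subE A (th i) (split_comp_sub_sum i)).
  exact: submx_trans (split_comp_raise i) (split_comp_sub_sum _).
have SAs : (S *m As <= S)%MS.
  rewrite sumsmxMr; apply/sumsmx_subP => -[i _] _ /=.
  rewrite -(mulmx_shift_subE As (ths i) (split_comp_sub_sum i)); case: i => [|i].
    by rewrite split_comp0_lower sub0mx.
  exact: submx_trans (split_comp_lower i) (split_comp_sub_sum _).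
have [v vAs v_neq0] : exists2 v : 'rV_n, v *m As = ths 0 *: v & v != 0.
  by apply/eigenvalueP; apply As_diag.2; exists 0%N.
have E0_sub_S : (prim_idem As d ths 0 <= S)%MS.
  apply: submx_trans (split_comp_sub_sum 0) => /=; rewrite sub_capmx.
  rewrite (sumsmx_sup ord0) //=; apply: submx_trans (submx1 _) _.
  rewrite -(sum_prim_idem th_inj A_diag); apply: summx_sub => j _.
  exact: (sumsmx_sup j).
have /orP[/andP[S_eq0 _]|//] := irreducible SA SAs.
have := mulmx_prim_idem_eigen ths_inj 0 (leq0n d) vAs.
rewrite eqxx => vE0.
have E0_eq0 : prim_idem As d ths 0 = 0 by apply/eqP; rewrite -submx0 (submx_trans E0_sub_S).
by move: v_neq0; rewrite -vE0 E0_eq0 mulmx0 eqxx.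
Qed.

End SplitDecomposition.

Section SplitGrading.
Variables (F : fieldType) (n : nat) (A As K : 'M[F]_n) (d : nat) (th ths : nat -> F).
Variable r : F.
Hypothesis tds : tridiagonal_system A As d th ths.
Hypothesis th_inj : forall i j, (i <= d)%N -> (j <= d)%N -> th i = th j -> i = j.
Hypothesis ths_inj : forall i j, (i <= d)%N -> (j <= d)%N -> ths i = ths j -> i = j.
Hypotheses (ths_neq0 : forall i, ths i != 0) (ths_S : forall i, ths i = r * ths i.+1).
Local Notation U := (split_comp A As d th ths).
Hypothesis UK : forall i, (i <= d)%N -> U i *m K = ths i *: U i.

Let U_full : row_full (\sum_(i < d.+1) U i).
Proof. by case: tds => *; apply: split_comp_sum_full. Qed.
Let U_eq0 := @split_comp_eq0 F n A As d th ths.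

Lemma split_grading_unitmx : K \in unitmx.
Proof. exact (grading_unitmx U_full U_eq0 UK (fun i _ => ths_neq0 i)). Qed.

Lemma split_lowering_weight : has_weight K r (As - K).
Proof.
case: tds => A_diag As_diag A_tridiag _ _.
have UR i : U i *m (As - K) = U i *m (As - (ths i)%:M).
  by rewrite !mulmxBr (grading_mulmx U_eq0 UK) mul_mx_scalar.
apply: (lowering_weight U_full U_eq0 UK) => [|i|//]; rewrite UR.
  exact: split_comp0_lower.
exact: split_comp_lower.
Qed.

Hypothesis th_ths : forall i, th i = (ths i)^-1.

Lemma split_raising_weight : has_weight K r^-1 (A - invmx K).
Proof.
case: tds => A_diag As_diag _ As_tridiag _.
have UL i : U i *m (A - invmx K) = U i *m (A - (th i)%:M).
  rewrite !mulmxBr (grading_invmx U_full U_eq0 UK (fun i _ => ths_neq0 i)).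
  by rewrite mul_mx_scalar th_ths.
apply: (raising_weight U_full U_eq0 UK) => i; first by rewrite UL split_comp_raise.
have r_neq0 : r != 0 by apply: contraNneq (ths_neq0 0) => r_eq0; rewrite ths_S r_eq0 mul0r.
by rewrite [ths i]ths_S mulKf.
Qed.

End SplitGrading.




Theorem lemma7p12 (F : closedFieldType) (n : nat) (q : F)
  (A As K : 'M[F]_n) (d : nat) (t : F) :
  (0 < n)%N ->
  q != 0 ->
  (forall m : nat, (0 < m)%N -> q ^+ m != 1) ->
  (1 <= d)%N ->
  tridiagonal_system A As d (fun i => q ^ (2 * (i : int) - (d : int)))
                            (fun i => q ^ ((d : int) - 2 * (i : int))) ->
  qSerre q A As ->
  (forall i : nat, (i <= d)%N ->
     split_comp A As d (fun i => q ^ (2 * (i : int) - (d : int)))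
                       (fun i => q ^ ((d : int) - 2 * (i : int))) i *m K
     = q ^ ((d : int) - 2 * (i : int)) *:
       split_comp A As d (fun i => q ^ (2 * (i : int) - (d : int)))
                         (fun i => q ^ ((d : int) - 2 * (i : int))) i) ->
  qSerre q A (t *: As + (1 - t) *: K).
Proof.
move=> _ q_neq0 q_nonroot _ tds /qSerreE[serre1 serre2].
set th := fun i : nat => _ in tds *.
set ths := fun i : nat => _ in tds *.
move=> UK; have pow_inj := expfz_inj q_neq0 q_nonroot.
have th_inj i j : (i <= d)%N -> (j <= d)%N -> th i = th j -> i = j.
  by move=> _ _ /pow_inj; lia.
have ths_inj i j : (i <= d)%N -> (j <= d)%N -> ths i = ths j -> i = j.
  by move=> _ _ /pow_inj; lia.
have ths_neq0 i : ths i != 0 by rewrite expfz_neq0.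
have ths_S i : ths i = q ^+ 2 * ths i.+1.
  by rewrite /ths -[q ^+ 2]/(q ^ 2%:Z) -expfzDr //; congr (_ ^ _); lia.
have th_ths i : th i = (ths i)^-1 by rewrite invr_expz opprB.
have K_unit := split_grading_unitmx tds th_inj ths_inj ths_neq0 UK.
have R_weight := split_lowering_weight tds th_inj ths_inj ths_S UK.
have L_weight := split_raising_weight tds th_inj ths_inj ths_neq0 ths_S UK th_ths.
rewrite qSerreE; split.
  rewrite serre_termDZ serre1 (serre_term_qWeyl q_neq0 (qWeyl_of_weight K_unit L_weight)).
  by rewrite !scaler0 addr0.
have -> : t *: As + (1 - t) *: K = K + t *: (As - K).
  by rewrite scalerBr scalerBl scale1r addrCA addrA.
have As_split : As = K + (As - K) by rewrite addrC subrK.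
have A_split : A = invmx K + (A - invmx K) by rewrite addrC subrK.
rewrite {1 2 3}As_split A_split in serre2; rewrite {1}A_split.
exact: serre_term_pencil.
Qed.
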